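(* Let $P,Q\in\mathcal{PP}(n)$ with $P\preceq Q$, and let $(i,j)\in E(P)$ be such that $E(Q)=E(P)\setminus\{(i,j)\}$. Then $i,j$ are two consecutive letters in the word representing $\Psi_n^{-1}(P)$, and the word representing $\Psi_n^{-1}(Q)$ is obtained from that of $\Psi_n^{-1}(P)$ by permuting these two consecutive letters $ij$.
   Context: A plane poset is a finite set with two partial orders $\leq_h,\leq_r$ such that two distinct elements are $\leq_h$-comparable iff they are not $\leq_r$-comparable; $\mathcal{PP}(n)$ is the set of isomorphism classes of plane posets with $n$ elements. On a plane poset, $x\leq y$ iff ($x\leq_h y$ or $x\leq_r y$) is a total order (known fact); each $P\in\mathcal{PP}(n)$ is identified with $\{1,\ldots,n\}$ as a totally ordered set. For $\sigma\in\mathfrak{S}_n$, represented by the word $\sigma(1)\cdots\sigma(n)$, $\Psi_n(\sigma)$ is the plane poset on $\{1,\ldots,n\}$ with $a\leq_h b$ iff ($a\leq b$ and $\sigma^{-1}(a)\leq\sigma^{-1}(b)$) and $a\leq_r b$ iff ($a\leq b$ and $\sigma^{-1}(a)\geq\sigma^{-1}(b)$); it is known that $\Psi_n:\mathfrak{S}_n\to\mathcal{PP}(n)$ is a bijection. For $P\in\mathcal{PP}(n)$, $E(P)=\{(a,b)\mid a<_h b\text{ in }P\}$; $P\preceq Q$ means there exists $(i,j)\in E(P)$ with $E(Q)=E(P)\setminus\{(i,j)\}$. *)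

From mathcomp Require Import all_boot all_order all_fingroup.
Set Implicit Arguments. Unset Strict Implicit. Unset Printing Implicit Defensive.

(* A plane poset on {1..n} (represented by 'I_n = {0..n-1}, with its natural
   total order being the order "x <=_h y or x <=_r y"), given by its two
   partial orders <=_h and <=_r. *)
Record pposet (n : nat) := PPoset { leh : rel 'I_n ; ler : rel 'I_n }.

(* Psi_n(sigma), where sigma : 'S_n is the word sigma(0) ... sigma(n-1);
   the position of the letter a in the word is sigma^-1 a. *)
Definition Psi n (s : 'S_n) : pposet n :=
  PPoset (fun a b : 'I_n => (a <= b)%N && (s^-1%g a <= s^-1%g b)%N)
         (fun a b : 'I_n => (a <= b)%N && (s^-1%g b <= s^-1%g a)%N).

Definition E n (P : pposet n) : {set 'I_n * 'I_n} :=
  [set ab | (ab.1 != ab.2) && leh P ab.1 ab.2].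

Definition prec_via n (P Q : pposet n) (i j : 'I_n) : Prop :=
  (i, j) \in E P /\ E Q = E P :\ (i, j).

From mathcomp Require Import all_boot all_order all_fingroup.
From mathcomp Require Import zify.

Set Implicit Arguments.
Unset Strict Implicit.
Unset Printing Implicit Defensive.

(* The position of a letter x in the word of a permutation r of 'I_n is the
   number of letters standing before it; hence a word is determined by the
   relative order of its letters' positions.  Passing from P to Q only reverses
   the relative order of the positions of i and j, so no letter can sit between
   i and j, and the word of tau is that of sigma with the adjacent letters i, j
   exchanged. *)

Lemma card_ltn_ord n m : (m <= n)%N -> #|[set v : 'I_n | (v < m)%N]| = m.
Proof.
move=> le_mn; have widen_inj : injective (widen_ord le_mn).
  by move=> a b /(congr1 val) eq_ab; apply: val_inj.
rewrite -[RHS]card_ord -(card_imset _ widen_inj).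
apply: eq_card => v; rewrite inE; apply/idP/imsetP => [lt_vm|[w _ ->]].
  by exists (Ordinal lt_vm) => //; apply: val_inj.
by rewrite /= ltn_ord.
Qed.

Lemma perm_rank n (r : 'S_n) x : #|[set y | (r y < r x)%N]| = r x.
Proof.
rewrite -(card_imset _ (@perm_inj _ r)) -[RHS](@card_ltn_ord n (r x) (ltnW (ltn_ord _))).
apply: eq_card => v; rewrite inE; apply/imsetP/idP => [[y]|lt_v].
  by rewrite inE => lt_y ->.
by exists (r^-1%g v); rewrite ?inE permKV.
Qed.

Lemma perm_ltn_inj n (r r' : 'S_n) :
  (forall x y, (r x < r y)%N = (r' x < r' y)%N) -> r = r'.
Proof.
move=> same_order; apply/permP => x; apply/val_inj/eqP.
rewrite -[X in X == _]perm_rank -[X in _ == X]perm_rank; apply/eqP/eq_card => y.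
by rewrite !inE same_order.
Qed.

Lemma perm_ltnNgt n (r : 'S_n) x y : x != y -> (r x < r y)%N = ~~ (r y < r x)%N.
Proof.
move=> neq_xy; rewrite ltnNge leq_eqVlt.
suff /negbTE-> : (r y != r x :> nat) by [].
by rewrite val_eqE (inj_eq (@perm_inj _ r)) eq_sym.
Qed.

Lemma tperm_adjacent_ltn n (a b u v : 'I_n) : nat_of_ord b = a.+1 ->
  (u, v) != (a, b) -> (v, u) != (a, b) ->
  (tperm a b u < tperm a b v)%N = (u < v)%N.
Proof.
move=> adj_ab; rewrite !xpair_eqE -!val_eqE /= adj_ab.
by case: tpermP => [->|->|/eqP ua /eqP ub]; case: tpermP => [->|->|/eqP va /eqP vb];
  rewrite -?val_eqE /= ?adj_ab ?eqxx ?ltnn //;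
  repeat match goal with H : is_true (_ != _) |- _ => rewrite -val_eqE /= ?adj_ab in H end;
  lia.
Qed.

Lemma mem_E_Psi n (s : 'S_n) a b :
  ((a, b) \in E (Psi s)) = (a < b)%N && (s^-1%g a < s^-1%g b)%N.
Proof.
rewrite inE /= [(a < b)%N]ltn_neqAle [(s^-1%g a < _)%N]ltn_neqAle.
by rewrite !val_eqE (inj_eq (@perm_inj _ _)); case: (a != b).
Qed.

Section RemoveOneEdge.

Variables (n : nat) (sigma tau : 'S_n) (i j : 'I_n).
Hypothesis Eij : (i, j) \in E (Psi sigma).
Hypothesis E_tau : E (Psi tau) = E (Psi sigma) :\ (i, j).

Local Notation p := (sigma^-1)%g.
Local Notation q := (tau^-1)%g.

Lemma mem_E_tau a b :
  ((a, b) \in E (Psi tau)) = ((a, b) != (i, j)) && ((a, b) \in E (Psi sigma)).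
Proof. by rewrite E_tau in_setD1. Qed.

Lemma inv_order_ij : (p i < p j)%N /\ (q j < q i)%N.
Proof.
move: Eij (mem_E_tau i j); rewrite eqxx !mem_E_Psi => /andP[lt_ij ->] /=.
have ne_ij : i != j by rewrite -val_eqE /= ltn_eqF.
by rewrite lt_ij perm_ltnNgt // => /negbT; rewrite negbK; split.
Qed.

Lemma inv_order_off_ij x y : (x, y) != (i, j) -> (y, x) != (i, j) ->
  (p x < p y)%N = (q x < q y)%N.
Proof.
have same (a b : 'I_n) : (a < b)%N -> (a, b) != (i, j) -> (p a < p b)%N = (q a < q b)%N.
  by move=> lt_ab ne_ab; have := mem_E_tau a b; rewrite !mem_E_Psi lt_ab ne_ab.
move=> ne_xy ne_yx; case: (ltngtP x y) => [lt_xy|lt_yx|/val_inj eq_xy].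
- exact: same.
- have x_neq_y : x != y by rewrite -val_eqE /= gtn_eqF.
  by rewrite perm_ltnNgt // [RHS]perm_ltnNgt // same.
- by rewrite eq_xy !ltnn.
Qed.

Lemma inv_adjacent_ij : nat_of_ord (p j) = (p i).+1.
Proof.
have [lt_pij lt_qji] := inv_order_ij.
apply/eqP; rewrite eqn_leq lt_pij andbT leqNgt; apply/negP => lt_between.
have lt_n : ((p i).+1 < n)%N := ltn_trans lt_between (ltn_ord _).
pose c := sigma (Ordinal lt_n).
have pc : nat_of_ord (p c) = (p i).+1 by rewrite /c permK.
have [ne_ci ne_cj] : c != i /\ c != j.
  by split; apply/eqP => eq_c; move: pc; rewrite eq_c; lia.
have := @inv_order_off_ij i c; have := @inv_order_off_ij c j.
rewrite !xpair_eqE eqxx (negbTE ne_ci) (negbTE ne_cj) ?andbF pc lt_between ltnSn.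
by move=> /(_ isT isT) lt_qcj /(_ isT isT) lt_qic; lia.
Qed.

Lemma inv_tau_tperm : q = (p * tperm (p i) (p j))%g.
Proof.
apply: perm_ltn_inj => x y; rewrite !permM.
have [lt_pij lt_qji] := inv_order_ij.
have [[-> ->] | ne_yx] := eqVneq (y, x) (i, j).
  by rewrite tpermL tpermR; apply/idP/idP; lia.
have [[-> ->] | ne_xy] := eqVneq (x, y) (i, j).
  by rewrite tpermL tpermR; apply/idP/idP; lia.
have pair_inj u v : (u, v) != (i, j) -> (p u, p v) != (p i, p j).
  by apply: contraNneq => -[/perm_inj -> /perm_inj ->].
by rewrite tperm_adjacent_ltn ?inv_adjacent_ij ?pair_inj // inv_order_off_ij.
Qed.

End RemoveOneEdge.

Theorem lemma14 (n : nat) (P Q : pposet n) (sigma tau : 'S_n) (i j : 'I_n) :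
  P = Psi sigma -> Q = Psi tau ->
  prec_via P Q i j ->
  (nat_of_ord (sigma^-1%g j) = (sigma^-1%g i).+1)%N /\
  (forall k : 'I_n, tau k = sigma (tperm (sigma^-1%g i) (sigma^-1%g j) k)).
Proof.
move=> -> -> [Eij E_tau]; split; first exact: inv_adjacent_ij Eij E_tau.
have -> : tau = (tperm (sigma^-1%g i) (sigma^-1%g j) * sigma)%g.
  by rewrite -[LHS]invgK (inv_tau_tperm Eij E_tau) invMg tpermV invgK.
by move=> k; rewrite permM.
Qed.
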